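(* Let $M$ be a right $R$-module with $S=\mathrm{End}_R(M)$. Consider the statements: (i) $M$ is an abelian Rickart module; (ii) $M$ is a centrally endo-AIP module; (iii) $M$ is an endo-AIP module. Then (i) $\Rightarrow$ (ii) and (ii) $\Rightarrow$ (iii). Neither converse holds in general: there exist modules satisfying (ii) but not (i), and modules satisfying (iii) but not (ii).
   Context: Rings are associative with identity; modules are unitary right modules. For $N\le M$, $l_S(N)=\{\phi\in S:\phi(N)=0\}$. A submodule $N$ is fully invariant if $\phi(N)\subseteq N$ for all $\phi\in S$. An ideal $I$ of a ring $A$ is right s-unital if for every $a\in I$ there is $x\in I$ with $ax=a$; it is centrally s-unital if for every $a\in I$ there is an element $z\in I$ central in $A$ with $az=a$. $M$ is centrally endo-AIP if $l_S(N)$ is a centrally s-unital ideal of $S$ for every fully invariant submodule $N$ of $M$; $M$ is endo-AIP if $l_S(N)$ is a right s-unital ideal of $S$ for every fully invariant submodule $N$. $M$ is Rickart if $\ker\phi$ is a direct summand of $M$ for every $\phi\in S$; $M$ is abelian if every idempotent of $S$ is central in $S$. *)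

(* Right R-modules are encoded as left modules over the
   converse ring R^c (lmodType R^c), so that  x *: (y *: m) = (y * x) *: m  in R,
   i.e. the scalar action m.r := r *: m is a right action. *)
From HB Require Import structures.
From mathcomp Require Import all_boot all_order all_algebra.
Set Implicit Arguments. Unset Strict Implicit. Unset Printing Implicit Defensive.
Import GRing.Theory.
Local Open Scope ring_scope.

Section ModuleDefs.
Variables (A : pzRingType) (M : lmodType A).

Definition endo (phi : M -> M) : Prop :=
  forall (a : A) (x y : M), phi (a *: x + y) = a *: phi x + phi y.

(* product in S: (phi * psi)(m) = phi (psi m); equality in S is pointwise *)
Definition endo_eq (phi psi : M -> M) : Prop := forall m, phi m = psi m.

Definition submodule (N : M -> Prop) : Prop :=
  N 0 /\ forall (a : A) (x y : M), N x -> N y -> N (a *: x + y).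

Definition fully_invariant (N : M -> Prop) : Prop :=
  submodule N /\ forall phi, endo phi -> forall x, N x -> N (phi x).

Definition lS (N : M -> Prop) (phi : M -> M) : Prop :=
  endo phi /\ forall x, N x -> phi x = 0.

Definition central_in_S (z : M -> M) : Prop :=
  forall psi, endo psi -> endo_eq (z \o psi) (psi \o z).

Definition ideal_S (I : (M -> M) -> Prop) : Prop :=
  [/\ (forall phi, I phi -> endo phi),
      I (fun _ => 0),
      (forall phi psi, I phi -> I psi -> I (fun m => phi m - psi m)),
      (forall phi psi, I phi -> endo psi -> I (psi \o phi)) &
      (forall phi psi, I phi -> endo psi -> I (phi \o psi))].

Definition right_s_unital (I : (M -> M) -> Prop) : Prop :=
  ideal_S I /\ forall a, I a -> exists x, I x /\ endo_eq (a \o x) a.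

Definition centrally_s_unital (I : (M -> M) -> Prop) : Prop :=
  ideal_S I /\
  forall a, I a -> exists z, [/\ I z, central_in_S z & endo_eq (a \o z) a].

Definition centrally_endo_AIP : Prop :=
  forall N, fully_invariant N -> centrally_s_unital (lS N).

Definition endo_AIP : Prop :=
  forall N, fully_invariant N -> right_s_unital (lS N).

Definition direct_summand (N : M -> Prop) : Prop :=
  submodule N /\
  exists K, [/\ submodule K,
     (forall m, N m -> K m -> m = 0) &
     (forall m, exists n k, [/\ N n, K k & m = n + k])].

Definition kernel (phi : M -> M) : M -> Prop := fun m => phi m = 0.

Definition rickart : Prop :=
  forall phi, endo phi -> direct_summand (kernel phi).

Definition abelian_module : Prop :=
  forall e, endo e -> endo_eq (e \o e) e -> central_in_S e.

End ModuleDefs.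

(* (i) => (ii): for a in l_S(N) the Rickart property splits M = ker a (+) K, and
   the projection z onto K along ker a is an idempotent with a z = a that kills
   N, since N is contained in ker a; in an abelian module z is central.
   (ii) => (iii) is immediate.
   Q^2 satisfies (ii) but not (i): its endomorphisms act transitively on nonzero
   vectors, so the only fully invariant submodules are 0 and Q^2, with
   annihilators S and 0 and central units 1 and 0; a coordinate projection is a
   non-central idempotent.
   Z (+) Q satisfies (iii) but not (ii): as Hom(Q, Z) = 0 and Z-linear maps
   Q -> Q are Q-linear, every endomorphism is (n, q) |-> (m n, r n + s q), whose
   kernel is a direct summand (0, 0 (+) Q, a graph {(n, c n)} or everything).
   So Z (+) Q is Rickart, hence endo-AIP.  The projection a onto Z annihilates
   the fully invariant 0 (+) Q.  A central z in l_S(0 (+) Q) with a z = a would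
   commute with psi : (n, q) |-> (0, n); as psi (1, 0) lies in 0 (+) Q,
   psi (z (1, 0)) = z (psi (1, 0)) = 0, and ker psi = ker a then gives
   a (1, 0) = a (z (1, 0)) = 0, which is false. *)

From HB Require Import structures.
From mathcomp Require Import all_boot all_order all_algebra.
From mathcomp Require Import ring.
From Stdlib Require Import ClassicalEpsilon Classical.
Set Implicit Arguments. Unset Strict Implicit. Unset Printing Implicit Defensive.
Import GRing.Theory.
Local Open Scope ring_scope.

Section EndoAIP.
Variables (A : pzRingType) (M : lmodType A).
Implicit Types (phi psi : M -> M) (N : M -> Prop).

Section Endomorphism.
Variable phi : M -> M.
Hypothesis endo_phi : endo phi.

Lemma endoD x y : phi (x + y) = phi x + phi y.
Proof. by rewrite -[x in LHS]scale1r endo_phi scale1r. Qed.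

Lemma endo0 : phi 0 = 0.
Proof. by apply/(addrI (phi 0)); rewrite -endoD !addr0. Qed.

Lemma endoZ a x : phi (a *: x) = a *: phi x.
Proof. by rewrite -[a *: x]addr0 endo_phi endo0 addr0. Qed.

Lemma endoB x y : phi (x - y) = phi x - phi y.
Proof. by rewrite endoD -scaleN1r endoZ scaleN1r. Qed.

End Endomorphism.

Lemma endo_id : endo (@id M).
Proof. by []. Qed.

Lemma endo_cst0 : endo (fun _ : M => 0).
Proof. by move=> a x y; rewrite scaler0 addr0. Qed.

Lemma endo_comp phi psi : endo phi -> endo psi -> endo (psi \o phi).
Proof. by move=> endo_phi endo_psi a x y /=; rewrite endo_phi endo_psi. Qed.

Lemma endo_diff phi psi : endo phi -> endo psi -> endo (fun m => phi m - psi m).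
Proof.
move=> endo_phi endo_psi a x y; rewrite endo_phi endo_psi scalerBr.
by rewrite opprD addrACA.
Qed.

Section Submodule.
Variable N : M -> Prop.
Hypothesis subN : submodule N.

Lemma submod0 : N 0.
Proof. by case: subN. Qed.

Lemma submodZ a x : N x -> N (a *: x).
Proof. by move=> Nx; rewrite -[a *: x]addr0; apply: subN.2 _ _ _ Nx submod0. Qed.

Lemma submodD x y : N x -> N y -> N (x + y).
Proof. by move=> Nx Ny; rewrite -[x]scale1r; apply: subN.2. Qed.

Lemma submodB x y : N x -> N y -> N (x - y).
Proof. by move=> Nx Ny; rewrite -scaleN1r; apply: submodD Nx (submodZ _ Ny). Qed.

End Submodule.

Lemma ideal_lS N : fully_invariant N -> ideal_S (lS N).
Proof.
move=> [subN invN]; split.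
- by move=> phi [].
- by split; [exact: endo_cst0|].
- move=> phi psi [endo_phi kill_phi] [endo_psi kill_psi].
  split=> [|x Nx]; first exact: endo_diff.
  by rewrite kill_phi // kill_psi // subrr.
- move=> phi psi [endo_phi kill_phi] endo_psi.
  split=> [|x Nx /=]; first exact: endo_comp.
  by rewrite kill_phi // endo0.
- move=> phi psi [endo_phi kill_phi] endo_psi.
  split=> [|x Nx /=]; first exact: endo_comp.
  by rewrite kill_phi //; apply: invN.
Qed.

Lemma direct_summand_proj N : direct_summand N ->
  exists p, [/\ endo p, forall m, N (p m) & forall m, N m -> p m = m].
Proof.
move=> [subN [K [subK NK0 NK_span]]].
have decomp m : exists n, N n /\ K (m - n).
  by have [n [k [Nn Kk ->]]] := NK_span m; exists n; rewrite addrC addKr.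
pose p m := proj1_sig (constructive_indefinite_description _ (decomp m)).
have pP m : N (p m) /\ K (m - p m).
  exact: proj2_sig (constructive_indefinite_description _ (decomp m)).
have p_uniq m n : N n -> K (m - n) -> p m = n.
  move=> Nn Kmn; have [Npm Kmpm] := pP m; apply/eqP; rewrite -subr_eq0; apply/eqP.
  apply: NK0; first exact: submodB.
  have -> : p m - n = (m - n) - (m - p m) by rewrite opprB [RHS]addrC addrA subrK.
  exact: submodB.
exists p; split=> [a x y|m|m Nm].
- apply: p_uniq.
    by apply: (submodD subN); [apply: (submodZ subN)|]; exact: (pP _).1.
  rewrite opprD addrACA -scalerBr.
  by apply: (submodD subK); [apply: (submodZ subK)|]; exact: (pP _).2.
- exact: (pP m).1.
- by apply: p_uniq; rewrite // subrr; apply: (submod0 subK).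
Qed.

Lemma rickart_idempotent_unit a : rickart M -> endo a ->
  exists z : M -> M, [/\ endo z, forall x, a x = 0 -> z x = 0,
                endo_eq (z \o z) z & endo_eq (a \o z) a].
Proof.
move=> rickM endo_a; have [p [endo_p ker_p p_id]] := direct_summand_proj (rickM a endo_a).
have z_endo : endo (fun m => m - p m) by apply: endo_diff.
exists (fun m => m - p m); split=> // [x /p_id->|m /=|m /=].
- by rewrite subrr.
- by rewrite endoB // [p (p m)]p_id // subrr subr0.
- by rewrite endoB // ker_p subr0.
Qed.

Lemma lS_idempotent_unit N a : rickart M -> lS N a ->
  exists z : M -> M, [/\ lS N z, endo_eq (z \o z) z & endo_eq (a \o z) a].
Proof.
move=> rickM [endo_a kill_a].
have [z [endo_z ker_z zz az]] := rickart_idempotent_unit rickM endo_a.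
by exists z; split=> //; split=> // x /kill_a /ker_z.
Qed.

Lemma abelian_rickart_centrally_endo_AIP :
  abelian_module M -> rickart M -> centrally_endo_AIP M.
Proof.
move=> abM rickM N fiN; split=> [|a aN]; first exact: ideal_lS.
have [z [zN zz az]] := lS_idempotent_unit rickM aN.
by exists z; split=> //; apply: abM zN.1 zz.
Qed.

Lemma rickart_endo_AIP : rickart M -> endo_AIP M.
Proof.
move=> rickM N fiN; split=> [|a aN]; first exact: ideal_lS.
by have [z [zN _ az]] := lS_idempotent_unit rickM aN; exists z.
Qed.

Lemma centrally_endo_AIP_endo_AIP : centrally_endo_AIP M -> endo_AIP M.
Proof.
move=> cAIP N fiN; have [idealN unitN] := cAIP N fiN; split=> // a aN.
by have [z [zN _ az]] := unitN a aN; exists z.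
Qed.

Lemma idempotent_fixed_direct_summand (P : M -> Prop) e :
  endo e -> (forall m, e (e m) = e m) -> (forall m, P m <-> e m = m) ->
  direct_summand P.
Proof.
move=> endo_e ee P_fix; split.
  split=> [|a x y /P_fix Px /P_fix Py]; apply/P_fix; first by rewrite endo0.
  by rewrite endo_e Px Py.
exists (fun m => e m = 0); split.
- split=> [|a x y ex ey]; first by rewrite endo0.
  by rewrite endo_e ex ey scaler0 addr0.
- by move=> m /P_fix em ez; rewrite -em.
- move=> m; exists (e m), (m - e m); split; first exact/P_fix/ee.
    by rewrite endoB // ee subrr.
  by rewrite addrC subrK.
Qed.

Lemma lS_not_centrally_s_unital N a psi m :
  lS N a -> endo psi -> (forall x, psi x = 0 -> a x = 0) -> N (psi m) -> a m <> 0 ->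
  ~ centrally_s_unital (lS N).
Proof.
move=> aN endo_psi ker_psi Npsim am0 [_ unitN].
have [z [[_ kill_z] central_z az]] := unitN a aN.
have psi_z : psi (z m) = z (psi m) := esym (central_z psi endo_psi m).
by apply: am0; rewrite -az /=; apply: ker_psi; rewrite psi_z kill_z.
Qed.

Definition endo_transitive :=
  forall x y : M, x <> 0 -> exists phi, endo phi /\ phi x = y.

Lemma transitive_centrally_endo_AIP :
  endo_transitive -> centrally_endo_AIP M.
Proof.
move=> transM N fiN; split=> [|a [endo_a kill_a]]; first exact: ideal_lS.
have [[x [Nx x0]]|N0] := classic (exists x, N x /\ x <> 0).
  have kill_a_all m : a m = 0.
    by have [phi [endo_phi <-]] := transM x m x0; apply/kill_a/fiN.2.
  exists (fun _ => 0); split=> [|psi endo_psi m|m] /=.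
  - by split=> //; exact: endo_cst0.
  - by rewrite endo0.
  - by rewrite !kill_a_all.
exists id; split=> //; split=> [|x Nx]; first exact: endo_id.
by apply: NNPP => x0; apply: N0; exists x.
Qed.
End EndoAIP.

Section Plane.
Variable F : fieldType.

Definition plane := ((F^c)^o * (F^c)^o)%type.

Lemma plane_transitive : endo_transitive plane.
Proof.
move=> [x1 x2] y x0.
have [f [f_lin fx1]] : exists f : plane -> F,
    (forall a u w, f (a *: u + w) = f u * a + f w) /\ f (x1, x2) = 1.
  (* [a *: x] is [x * a] in F: the scalars act on the right *)
  have [x1_0|x1_0] := eqVneq x1 0.
    have x2_0 : x2 != 0 by apply/eqP => x2_0; apply: x0; rewrite x1_0 x2_0.
    exists (fun v => (v.2 : F) / x2); split=> [a u w|]; last exact: divff.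
    by change (((u.2 : F) * a + w.2) / x2 = (u.2 : F) / x2 * a + (w.2 : F) / x2);
      rewrite mulrDl mulrAC.
  exists (fun v => (v.1 : F) / x1); split=> [a u w|]; last exact: divff.
  by change (((u.1 : F) * a + w.1) / x1 = (u.1 : F) / x1 * a + (w.1 : F) / x1);
    rewrite mulrDl mulrAC.
exists (fun v => (f v : F^c) *: y); split=> [a u w|]; last by rewrite fx1 scale1r.
by rewrite f_lin scalerDl scalerA.
Qed.

Lemma plane_not_abelian : ~ abelian_module plane.
Proof.
pose e (v : plane) : plane := (v.1, 0).
pose swap (v : plane) : plane := (v.2, v.1).
have endo_e : endo e.
  by move=> a u w; apply: injective_projections; rewrite /= ?scaler0 ?addr0.
have endo_swap : endo swap by [].
move=> abM; have /(congr1 fst)/eqP := abM e endo_e (fun => erefl) swap endo_swap (0, 1).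
by rewrite /= oner_eq0.
Qed.
End Plane.

Lemma int_divisible_eq0 (t : int) : (forall k : int, k != 0 -> (k %| t)%Z) -> t = 0.
Proof.
move=> div_t; apply/eqP; rewrite -absz_eq0 -leqn0 leqNgt; apply/negP => t_gt0.
have := dvdn_leq t_gt0 (div_t (absz t).+1%:Z isT).
by rewrite ltnn.
Qed.

Definition ratZ : Type := rat.
HB.instance Definition _ := GRing.Zmodule.on ratZ.

Definition ratZ_scale (a : int^c) (q : ratZ) : ratZ := (a : int)%:~R * (q : rat).

Fact ratZ_scaleA a b q : ratZ_scale a (ratZ_scale b q) = ratZ_scale (a * b) q.
Proof.
rewrite /ratZ_scale (_ : a * b = (b : int) * a :> int) // intrM.
by rewrite mulrA [X in X * _]mulrC.
Qed.
Fact ratZ_scale1 : left_id 1 ratZ_scale.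
Proof. by move=> q; rewrite /ratZ_scale mul1r. Qed.
Fact ratZ_scaleDr : right_distributive ratZ_scale +%R.
Proof. by move=> a p q; rewrite /ratZ_scale mulrDr. Qed.
Fact ratZ_scaleDl q : {morph ratZ_scale^~ q : a b / a + b}.
Proof. by move=> a b; rewrite /ratZ_scale intrD mulrDl. Qed.
HB.instance Definition _ := GRing.Zmodule_isLmodule.Build int^c ratZ
  ratZ_scaleA ratZ_scale1 ratZ_scaleDr ratZ_scaleDl.

Definition ZQ := ((int^c)^o * ratZ)%type.
Definition mkZQ (n : int) (q : rat) : ZQ := (n, q).
Definition zpart (v : ZQ) : int := v.1.
Definition qpart (v : ZQ) : rat := v.2.

Lemma ZQ_eq u v : zpart u = zpart v -> qpart u = qpart v -> u = v.
Proof. by case: u v => [n q] [n' q'] /= -> ->. Qed.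

Lemma zpart_mk n q : zpart (mkZQ n q) = n. Proof. by []. Qed.
Lemma qpart_mk n q : qpart (mkZQ n q) = q. Proof. by []. Qed.
Lemma zpartD u v : zpart (u + v) = zpart u + zpart v. Proof. by []. Qed.
Lemma qpartD u v : qpart (u + v) = qpart u + qpart v. Proof. by []. Qed.
Lemma zpartZ (a : int^c) v : zpart (a *: v) = (a : int) * zpart v.
Proof. exact: mulrC. Qed.
Lemma qpartZ (a : int^c) v : qpart (a *: v) = (a : int)%:~R * qpart v.
Proof. by []. Qed.
Lemma zpart0 : zpart 0 = 0. Proof. by []. Qed.
Lemma qpart0 : qpart 0 = 0. Proof. by []. Qed.

Definition ZQE := (zpartD, qpartD, zpartZ, qpartZ, zpart0, qpart0, zpart_mk, qpart_mk).

Section ZQEndomorphism.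
Variable phi : ZQ -> ZQ.
Hypothesis endo_phi : endo phi.

Lemma zpart_endo_mk0 q : zpart (phi (mkZQ 0 q)) = 0.
Proof.
apply: int_divisible_eq0 => k k0; apply/dvdzP.
have q_div : mkZQ 0 q = (k : int^c) *: mkZQ 0 (q / k%:~R).
  by apply: ZQ_eq; rewrite !ZQE ?mulr0 // mulrC divfK // intr_eq0.
by exists (zpart (phi (mkZQ 0 (q / k%:~R)))); rewrite q_div endoZ // zpartZ mulrC.
Qed.

Lemma qpart_endo_mk0 q : qpart (phi (mkZQ 0 q)) = q * qpart (phi (mkZQ 0 1)).
Proof.
have phiZ (k : int) x :
    qpart (phi (mkZQ 0 (k%:~R * x))) = k%:~R * qpart (phi (mkZQ 0 x)).
  have -> : mkZQ 0 (k%:~R * x) = (k : int^c) *: mkZQ 0 x.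
    by apply: ZQ_eq; rewrite !ZQE ?mulr0.
  by rewrite endoZ // qpartZ.
have d0 : (denq q)%:~R != 0 :> rat by rewrite intr_eq0 denq_neq0.
apply: (mulIf d0); rewrite [LHS]mulrC -phiZ [_%:~R * q]mulrC -numqE.
by rewrite -[X in mkZQ 0 X]mulr1 phiZ numqE mulrAC.
Qed.

Lemma ZQ_endoP : exists (m : int) (r s : rat), forall v,
  phi v = mkZQ (zpart v * m) ((zpart v)%:~R * r + qpart v * s).
Proof.
exists (zpart (phi (mkZQ 1 0))), (qpart (phi (mkZQ 1 0))), (qpart (phi (mkZQ 0 1))).
move=> v; have vE : v = (zpart v : int^c) *: mkZQ 1 0 + mkZQ 0 (qpart v).
  by apply: ZQ_eq; rewrite !ZQE ?mulr1 ?mulr0 ?addr0 ?add0r.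
rewrite {1}vE endo_phi; apply: ZQ_eq.
  by rewrite zpartD zpartZ zpart_mk zpart_endo_mk0 // addr0.
by rewrite qpartD qpartZ qpart_mk qpart_endo_mk0.
Qed.
End ZQEndomorphism.

Definition ZQ_rat_proj (v : ZQ) : ZQ := mkZQ 0 (qpart v).
Definition ZQ_graph_proj (c : rat) (v : ZQ) : ZQ := mkZQ (zpart v) ((zpart v)%:~R * c).

Lemma endo_ZQ_rat_proj : endo ZQ_rat_proj.
Proof. by move=> a u w; apply: ZQ_eq; rewrite !ZQE ?mulr0 ?addr0. Qed.

Lemma endo_ZQ_graph_proj c : endo (ZQ_graph_proj c).
Proof.
move=> a u w; apply: ZQ_eq; rewrite !ZQE // intrD intrM.
by rewrite mulrDl mulrA.
Qed.

Lemma ZQ_rat_proj_fixed v : ZQ_rat_proj v = v <-> zpart v = 0.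
Proof.
split=> [/(congr1 zpart)|v0]; first by rewrite zpart_mk.
by apply: ZQ_eq; rewrite !ZQE.
Qed.

Lemma ZQ_graph_proj_fixed c v : ZQ_graph_proj c v = v <-> qpart v = (zpart v)%:~R * c.
Proof.
split=> [/(congr1 qpart)|vc]; first by rewrite qpart_mk.
by apply: ZQ_eq; rewrite !ZQE.
Qed.

Lemma ZQ_kernel_fixed (m : int) (r s : rat) : exists e : ZQ -> ZQ,
  [/\ endo e, forall v, e (e v) = e v &
      forall v, zpart v * m = 0 /\ (zpart v)%:~R * r + qpart v * s = 0 <-> e v = v].
Proof.
have [s0|s_neq0] := eqVneq s 0.
  have [[m0 r0]|mr_neq0] := classic (m = 0 /\ r = 0).
    exists id; split=> // v; split=> // _.
    by rewrite m0 r0 s0 !mulr0 addr0.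
  exists ZQ_rat_proj; split=> [|v|v]; first exact: endo_ZQ_rat_proj.
    by rewrite /ZQ_rat_proj qpart_mk.
  rewrite ZQ_rat_proj_fixed s0 mulr0 addr0.
  split=> [[nm nr]|->]; last by rewrite mul0r mul0r.
  have [//|n0] := eqVneq (zpart v) 0; case: mr_neq0; split.
    by move/eqP: nm; rewrite mulf_eq0 (negbTE n0) => /eqP.
  by move/eqP: nr; rewrite mulf_eq0 intr_eq0 (negbTE n0) => /eqP.
have [m0|m_neq0] := eqVneq m 0.
  exists (ZQ_graph_proj (- r / s)); split=> [|v|v]; first exact: endo_ZQ_graph_proj.
    by rewrite /ZQ_graph_proj !ZQE.
  rewrite ZQ_graph_proj_fixed m0 mulr0.
  split=> [[_ /eqP]|->]; last by split=> //; field.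
  rewrite addrC addr_eq0 => /eqP qs.
  by apply: (mulIf s_neq0); rewrite qs; field.
exists (fun _ => 0); split=> [|//|v]; first exact: endo_cst0.
split=> [[/eqP nm nrqs]|<-]; last by rewrite !ZQE !mul0r addr0.
move: nm; rewrite mulf_eq0 (negbTE m_neq0) orbF => /eqP n0.
move: nrqs; rewrite n0 mul0r add0r => /eqP; rewrite mulf_eq0 (negbTE s_neq0) orbF => /eqP q0.
by apply: ZQ_eq; rewrite ZQE.
Qed.

Lemma ZQ_rickart : rickart ZQ.
Proof.
move=> phi /ZQ_endoP [m [r [s phiE]]].
have [e [endo_e idem_e kerE]] := ZQ_kernel_fixed m r s.
apply: (idempotent_fixed_direct_summand endo_e idem_e) => v.
apply: iff_trans (kerE v); rewrite /kernel phiE.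
split=> [phi0|[nm nrqs]]; last by apply: ZQ_eq; rewrite !ZQE.
by split; [move/(congr1 zpart): phi0 | move/(congr1 qpart): phi0]; rewrite !ZQE.
Qed.

Definition ZQ_rat_summand (v : ZQ) : Prop := zpart v = 0.

Lemma fully_invariant_ZQ_rat_summand : fully_invariant ZQ_rat_summand.
Proof.
split.
  split=> [//|a u w]; rewrite /ZQ_rat_summand !ZQE => -> ->.
  by rewrite mulr0 addr0.
move=> phi endo_phi v v0.
rewrite /ZQ_rat_summand -(zpart_endo_mk0 endo_phi (qpart v)).
by congr (zpart (phi _)); apply: ZQ_eq.
Qed.

Lemma ZQ_not_centrally_endo_AIP : ~ centrally_endo_AIP ZQ.
Proof.
pose a (v : ZQ) := mkZQ (zpart v) 0.
pose psi (v : ZQ) := mkZQ 0 (zpart v)%:~R.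
have endo_a : endo a by move=> b u w; apply: ZQ_eq; rewrite !ZQE ?mulr0 ?addr0.
have endo_psi : endo psi.
  by move=> b u w; apply: ZQ_eq; rewrite !ZQE ?mulr0 ?addr0 // intrD intrM.
have aN : lS ZQ_rat_summand a.
  by split=> // v v0; apply: ZQ_eq; rewrite !ZQE.
move=> /(_ _ fully_invariant_ZQ_rat_summand).
apply: (lS_not_centrally_s_unital (m := mkZQ 1 0) aN endo_psi).
- move=> v /(congr1 qpart); rewrite !ZQE => /eqP; rewrite intr_eq0 => /eqP v0.
  by apply: ZQ_eq; rewrite !ZQE.
- by rewrite /ZQ_rat_summand /psi zpart_mk.
- by move=> /(congr1 zpart); rewrite !ZQE.
Qed.

Theorem proposition2p2 :
  (forall (R : pzRingType) (M : lmodType R^c),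
      abelian_module M /\ rickart M -> centrally_endo_AIP M) /\
  (forall (R : pzRingType) (M : lmodType R^c),
      centrally_endo_AIP M -> endo_AIP M) /\
  (exists (R : pzRingType) (M : lmodType R^c),
      centrally_endo_AIP M /\ ~ (abelian_module M /\ rickart M)) /\
  (exists (R : pzRingType) (M : lmodType R^c),
      endo_AIP M /\ ~ centrally_endo_AIP M).
Proof.
split; first by move=> R M [abM rickM]; exact: abelian_rickart_centrally_endo_AIP.
split; first by move=> R M; exact: centrally_endo_AIP_endo_AIP.
split.
  exists rat, (plane rat); split.
    exact: transitive_centrally_endo_AIP (@plane_transitive rat).
  by case=> /plane_not_abelian.
exists int, ZQ; split; first exact/rickart_endo_AIP/ZQ_rickart.
exact: ZQ_not_centrally_endo_AIP.
Qed.
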